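(* Let $l$ be a prime number, let $\mathcal{T}_l\cong\prod_{k\in\mathbb{N}}\mathbb{Z}/l^k\mathbb{Z}$, let $A$ be a finite abelian $l$-group, and let $\mathcal{D}$ be a pro-$l$ abelian group with an exact sequence of pro-$l$ abelian groups $0\to\mathcal{T}_l\to\mathcal{D}\xrightarrow{\pi} A\to 0$ such that the topological closure of the torsion subgroup of $\mathcal{D}$ equals the image of $\mathcal{T}_l$. Let $X^{\vee}=\mathrm{Hom}_{cont}(X,\mathbb{R}/\mathbb{Z})$ denote the Pontryagin dual, and regard $A^{\vee}$ as a subgroup of $\mathcal{D}^{\vee}$ via the injection $\pi^{\vee}$. Then for every non-zero $x\in A^{\vee}$ and every natural number $n$ there exists $c_x\in\mathcal{D}^{\vee}$ with $l^n c_x=x$. *)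

From HB Require Import structures.
From mathcomp Require Import all_boot all_order all_algebra.
From mathcomp Require Import all_classical all_reals all_analysis.
Set Implicit Arguments. Unset Strict Implicit. Unset Printing Implicit Defensive.
Import Order.TTheory GRing.Theory Num.Theory.
Local Open Scope classical_set_scope.
Local Open Scope ring_scope.

(* Factors indexed by k : nat stand for Z/l^(k+1)Z (the factor Z/l^0Z = 0 is
   trivial, and 'Z_1 would NOT be the trivial group in MathComp). *)
Definition Tl (l : nat) : Type :=
  prod_topology (fun k : nat => discrete_topology 'Z_(l ^ k.+1)).

Definition Tl_add (l : nat) (x y : Tl l) : Tl l :=
  fun k => ((x k : 'Z_(l ^ k.+1)) + (y k : 'Z_(l ^ k.+1)))%R.

Definition eqmodZ {R : realType} (a b : R) : Prop :=
  exists z : int, a - b = z%:~R.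

(* a map D -> R/Z (given by a representative D -> R) is continuous for the
   quotient (metric) topology of R/Z *)
Definition continuous_modZ {R : realType} {T : topologicalType} (f : T -> R)
  : Prop :=
  forall (x : T) (e : R), 0 < e ->
    \forall y \near x, exists z : int, `|f y - f x - z%:~R| < e.

(* elements of the Pontryagin dual Hom_cont(D, R/Z), via representatives *)
Definition is_character {R : realType} (D : topologicalZmodType) (f : D -> R)
  : Prop :=
  (forall x y : D, eqmodZ (f (x + y)) (f x + f y)) /\ continuous_modZ f.

(* elements of Hom(A, R/Z) for a finite (discrete) group A *)
Definition is_fin_character {R : realType} (A : finZmodType) (f : A -> R)
  : Prop :=
  forall x y : A, eqmodZ (f (x + y)) (f x + f y).

Definition is_subgroup (G : zmodType) (H : set G) : Prop :=
  H 0 /\ (forall x y, H x -> H y -> H (x - y)).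

Definition has_index (G : zmodType) (H : set G) (m : nat) : Prop :=
  exists f : G -> 'I_m, (forall i, exists x, f x = i) /\
    (forall x y, f x = f y <-> H (x - y)).

Definition is_pro_l (l : nat) (D : topologicalZmodType) : Prop :=
  [/\ hausdorff_space D, compact [set: D],
      (forall U : set D, nbhs (0 : D) U ->
          exists H : set D, [/\ is_subgroup H, open H & H `<=` U]) &
      (forall H : set D, is_subgroup H -> open H ->
          exists n : nat, has_index H (l ^ n))].

Definition torsion (D : zmodType) : set D :=
  [set d | exists m : nat, (0 < m)%N /\ d *+ m = 0].

(* Let [m = l ^ n] and [T = ker pi].  By compactness there is an open subgroup [H0] with
   [m g \in H0 -> g \in T]: otherwise a cluster point [p] of such [g \notin T] has [m p] in
   every open subgroup, so [m p = 0]; then [p] is torsion, hence lies in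
   [closure torsion = T], while [p \notin T] because [T] is open.  On [U = H0 :&: T], an open
   subgroup of finite index, the assignment [u + m d |-> x (pi d)] is a well defined character
   of [U + m D].  As R/Z is divisible it extends to all of [D] by adjoining one coset
   representative of [U] at a time.  The extension [c] vanishes on the open subgroup [U],
   hence is continuous, and [m c(d) = c(m d) = x (pi d)]. *)

Set Warnings "-notation-overridden,-ambiguous-paths,-notation-incompatible-prefix".
From HB Require Import structures.
From mathcomp Require Import all_boot all_order all_algebra.
From mathcomp Require Import all_classical all_reals all_analysis.
From mathcomp Require Import ring.
Set Implicit Arguments. Unset Strict Implicit. Unset Printing Implicit Defensive.
Import Order.TTheory GRing.Theory Num.Theory.
Local Open Scope classical_set_scope.
Local Open Scope ring_scope.

Section EqModZ.
Variable R : realType.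
Implicit Types a b c d : R.

Lemma eqmodZ_refl a : eqmodZ a a.
Proof. by exists 0; rewrite subrr. Qed.

Lemma eqmodZ_sym a b : eqmodZ a b -> eqmodZ b a.
Proof. by move=> [z hz]; exists (- z); rewrite intrN -hz opprB. Qed.

Lemma eqmodZ_trans a b c : eqmodZ a b -> eqmodZ b c -> eqmodZ a c.
Proof. by move=> [z1 h1] [z2 h2]; exists (z1 + z2); rewrite intrD -h1 -h2 addrA subrK. Qed.

Lemma eqmodZD a b c d : eqmodZ a b -> eqmodZ c d -> eqmodZ (a + c) (b + d).
Proof. by move=> [z1 h1] [z2 h2]; exists (z1 + z2); rewrite intrD -h1 -h2 opprD addrACA. Qed.

Lemma eqmodZN a b : eqmodZ a b -> eqmodZ (- a) (- b).
Proof. by move=> [z hz]; exists (- z); rewrite intrN -hz opprB opprK addrC. Qed.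

End EqModZ.

Section Subgroup.
Variables (G : zmodType) (H : set G).
Hypothesis sH : is_subgroup H.

Lemma subgroup0 : H 0.
Proof. by case: sH. Qed.

Lemma subgroupB x y : H x -> H y -> H (x - y).
Proof. by case: sH => _; apply. Qed.

Lemma subgroupN x : H x -> H (- x).
Proof. by move=> Hx; rewrite -sub0r; apply: subgroupB => //; apply: subgroup0. Qed.

Lemma subgroupD x y : H x -> H y -> H (x + y).
Proof. by move=> Hx Hy; rewrite -[y]opprK; apply: subgroupB => //; apply: subgroupN. Qed.

Lemma subgroupMn x m : H x -> H (x *+ m).
Proof.
move=> Hx; elim: m => [|m IH]; first by rewrite mulr0n; apply: subgroup0.
by rewrite mulrS; apply: subgroupD.
Qed.

Lemma subgroupMz x i : H x -> H (x *~ i).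
Proof.
move=> Hx; case: i => m; first exact: subgroupMn.
by rewrite NegzE mulrNz; apply: subgroupN; apply: subgroupMn.
Qed.

Lemma subgroup_mulrz_dvd g k : (0 < k)%N -> H (g *+ k) ->
    (forall j, (0 < j < k)%N -> ~ H (g *+ j)) ->
  forall i, H (g *~ i) -> (k%:Z %| i)%Z.
Proof.
move=> k_gt0 Hgk kmin i Hgi; apply/dvdz_mod0P.
have k0 : k%:Z != 0 by rewrite eqz_nat -lt0n.
have [r er] : exists r : nat, (i %% k)%Z = r%:Z.
  by exists `|(i %% k)%Z|%N; rewrite gez0_abs // modz_ge0.
have Hgr : H (g *+ r).
  have -> : g *+ r = g *~ i - (g *+ k) *~ (i %/ k)%Z.
    rewrite !pmulrn -mulrzA -mulrzBr -er {2}(divz_eq i k).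
    by rewrite [k%:Z * _]mulrC addrAC subrr add0r.
  by apply: subgroupB => //; apply: subgroupMz.
rewrite er; case: r er Hgr => // r er Hgr; exfalso; apply: (kmin r.+1) => //.
by rewrite /= -ltz_nat -er ltz_pmod // ltz_nat.
Qed.

End Subgroup.

Lemma subgroupT {G : zmodType} : is_subgroup [set: G].
Proof. by []. Qed.

Lemma subgroupI (G : zmodType) (H K : set G) :
  is_subgroup H -> is_subgroup K -> is_subgroup (H `&` K).
Proof.
move=> sH sK; split; first by split; apply: subgroup0.
by move=> x y [Hx Kx] [Hy Ky]; split; apply: subgroupB.
Qed.

Lemma has_index_mulrn (G : zmodType) (U : set G) (N : nat) :
  has_index U N -> forall g, exists2 k, (0 < k)%N & U (g *+ k).
Proof.
move=> [f [_ fE]] g; pose F (i : 'I_N.+1) := f (g *+ i).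
have : ~ injective F by move=> /leq_card; rewrite !card_ord ltnn.
move=> /existsNP [i /existsNP [j /not_implyP [Fij nij]]].
have mulrn_in (a b : 'I_N.+1) : (a < b)%N -> F a = F b ->
    exists2 k, (0 < k)%N & U (g *+ k).
  move=> lt_ab Fab; exists (b - a)%N; first by rewrite subn_gt0.
  by rewrite mulrnBr ?(ltnW lt_ab) //; apply/fE; rewrite -/(F b) -/(F a) Fab.
case: (ltngtP i j) => [lt_ij|lt_ji|eq_ij].
- exact: mulrn_in lt_ij Fij.
- exact: mulrn_in lt_ji (esym Fij).
- by case: nij; exact: val_inj.
Qed.

Definition character_on (R : realType) (G : zmodType) (H : set G) (phi : G -> R) :=
  forall x y, H x -> H y -> eqmodZ (phi (x + y)) (phi x + phi y).

Section CharacterOn.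
Variables (R : realType) (G : zmodType) (H : set G) (phi : G -> R).
Hypotheses (sH : is_subgroup H) (phiH : character_on H phi).

Lemma character_on0 : eqmodZ (phi 0) 0.
Proof.
have [z hz] := phiH (subgroup0 sH) (subgroup0 sH); rewrite addr0 in hz.
by exists (- z); rewrite intrN -hz; ring.
Qed.

Lemma character_onB x y : H x -> H y -> eqmodZ (phi (x - y)) (phi x - phi y).
Proof.
move=> Hx Hy; have [z hz] := phiH (subgroupB sH Hx Hy) Hy; rewrite subrK in hz.
by exists (- z); rewrite intrN -hz; ring.
Qed.

Lemma character_onN x : H x -> eqmodZ (phi (- x)) (- phi x).
Proof.
move=> Hx; rewrite -sub0r -[- phi x]add0r.
apply: eqmodZ_trans (character_onB (subgroup0 sH) Hx) _.
by apply: eqmodZD; [exact: character_on0 | exact: eqmodZ_refl].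
Qed.

Lemma character_onMn x m : H x -> eqmodZ (phi (x *+ m)) (m%:R * phi x).
Proof.
move=> Hx; elim: m => [|m IH]; first by rewrite mulr0n mul0r; exact: character_on0.
rewrite mulrS (_ : m.+1%:R * phi x = phi x + m%:R * phi x); last first.
  by rewrite mulrSr mulrDl mul1r addrC.
apply: eqmodZ_trans (phiH Hx (subgroupMn sH m Hx)) _.
by apply: eqmodZD => //; exact: eqmodZ_refl.
Qed.

Lemma character_onMz x i : H x -> eqmodZ (phi (x *~ i)) (i%:~R * phi x).
Proof.
move=> Hx; case: i => m; first exact: character_onMn.
rewrite NegzE mulrNz intrN mulNr.
apply: eqmodZ_trans (character_onN (subgroupMn sH m.+1 Hx)) _.
exact/eqmodZN/character_onMn.
Qed.

End CharacterOn.

Definition adjoin (G : zmodType) (H : set G) (g : G) : set G :=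
  [set y | exists hj : G * int, H hj.1 /\ y = hj.1 + g *~ hj.2].

Section Adjoin.
Variables (G : zmodType) (H : set G) (g : G).
Hypothesis sH : is_subgroup H.

Lemma adjoin_subgroup : is_subgroup (adjoin H g).
Proof.
split; first by exists (0, 0); split; [exact: subgroup0 | rewrite mulr0z addr0].
move=> _ _ [[h1 j1] [H1 ->]] [[h2 j2] [H2 ->]] /=.
exists (h1 - h2, j1 - j2); split; first exact: subgroupB.
by rewrite mulrzBr opprD addrACA.
Qed.

Lemma sub_adjoin : H `<=` adjoin H g.
Proof. by move=> h Hh; exists (h, 0); rewrite mulr0z addr0. Qed.

Lemma adjoin_gen : adjoin H g g.
Proof. by exists (0, 1); split; [exact: subgroup0 | rewrite add0r]. Qed.

End Adjoin.

Section AdjoinCharacter.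
Variables (R : realType) (G : zmodType) (H : set G) (phi : G -> R) (g : G).
Hypotheses (sH : is_subgroup H) (phiH : character_on H phi).
Variable k : nat.
Hypotheses (k_gt0 : (0 < k)%N) (Hgk : H (g *+ k)).
Hypothesis k_dvd : forall i, H (g *~ i) -> (k%:Z %| i)%Z.

(* Divisibility of R/Z: the only constraint on the new value at [g] is [k a = phi (k g)]. *)
Let a : R := phi (g *+ k) / k%:R.

Lemma adjoin_value_wd h1 h2 j1 j2 : H h1 -> H h2 -> h1 + g *~ j1 = h2 + g *~ j2 ->
  eqmodZ (phi h1 + j1%:~R * a) (phi h2 + j2%:~R * a).
Proof.
move=> H1 H2 e.
have e12 : h1 - h2 = g *~ (j2 - j1).
  have -> : h1 = h2 + g *~ j2 - g *~ j1 by rewrite -e addrK.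
  by rewrite mulrzBr addrAC [h2 + _]addrC addrK.
have /dvdzP [q eq] : (k%:Z %| j2 - j1)%Z.
  by apply: k_dvd; rewrite -e12; exact: subgroupB.
have [z hz] : eqmodZ (phi h1 - phi h2) (q%:~R * phi (g *+ k)).
  apply: eqmodZ_trans (eqmodZ_sym (character_onB sH phiH H1 H2)) _.
  by rewrite e12 eq mulrC mulrzA -pmulrn; exact: (character_onMz sH phiH q Hgk).
have ej2 : (j2%:~R : R) = j1%:~R + q%:~R * k%:R.
  by rewrite -[k%:R]/((k%:Z)%:~R : R) -intrM -eq intrB; ring.
have k0 : (k%:R : R) != 0 by rewrite pnatr_eq0 -lt0n.
by exists z; rewrite -hz ej2 /a; field.
Qed.

Lemma character_on_adjoin_dvd : exists psi : G -> R,
  character_on (adjoin H g) psi /\ forall h, H h -> eqmodZ (psi h) (phi h).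
Proof.
pose decomp y := xget (0, 0) [set hj : G * int | H hj.1 /\ y = hj.1 + g *~ hj.2].
pose psi y := phi (decomp y).1 + (decomp y).2%:~R * a.
have psiE y h j : H h -> y = h + g *~ j -> eqmodZ (psi y) (phi h + j%:~R * a).
  move=> Hh ey.
  have [|Hd ed] := @xgetPex _ (0, 0) [set hj | H hj.1 /\ y = hj.1 + g *~ hj.2].
    by exists (h, j).
  by apply: adjoin_value_wd => //; rewrite -ed.
exists psi; split => [_ _ [[h1 j1] [H1 ->]] [[h2 j2] [H2 ->]]|h Hh] /=.
- apply: eqmodZ_trans (psiE _ (h1 + h2) (j1 + j2) (subgroupD sH H1 H2) _) _.
    by rewrite mulrzDr addrACA.
  apply: eqmodZ_trans (eqmodZD (phiH H1 H2) (eqmodZ_refl _)) _.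
  rewrite intrD mulrDl addrACA.
  by apply: eqmodZD; apply: eqmodZ_sym; apply: psiE.
- by have := psiE h h 0 Hh; rewrite mulr0z mul0r !addr0; apply.
Qed.

End AdjoinCharacter.

Lemma character_on_adjoin (R : realType) (G : zmodType) (H : set G) (phi : G -> R) g :
    is_subgroup H -> character_on H phi -> (exists2 k, (0 < k)%N & H (g *+ k)) ->
  exists psi : G -> R,
    character_on (adjoin H g) psi /\ forall h, H h -> eqmodZ (psi h) (phi h).
Proof.
move=> sH phiH [k0 k0_gt0 Hgk0].
have exk : exists k, (0 < k)%N && `[< H (g *+ k) >] by exists k0; rewrite k0_gt0 asboolT.
have [k /andP[k_gt0 /asboolP Hgk] kmin] := ex_minnP exk.
apply: (character_on_adjoin_dvd sH phiH k_gt0 Hgk).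
apply: subgroup_mulrz_dvd => // j /andP[j_gt0 lt_jk] Hgj.
by have := kmin j; rewrite j_gt0 asboolT // leqNgt lt_jk => /(_ isT).
Qed.

Lemma character_on_extend_seq (R : realType) (G : zmodType) (s : seq G)
    (H : set G) (phi : G -> R) :
    is_subgroup H -> character_on H phi ->
    (forall g, exists2 k, (0 < k)%N & H (g *+ k)) ->
  exists (H' : set G) (psi : G -> R),
    [/\ is_subgroup H', H `<=` H', (forall r, r \in s -> H' r), character_on H' psi &
        forall h, H h -> eqmodZ (psi h) (phi h)].
Proof.
elim: s H phi => [|r s IH] H phi sH phiH Hmul.
  by exists H, phi; split => // h _; exact: eqmodZ_refl.
have [psi [psiH psiE]] := character_on_adjoin sH phiH (Hmul r).
have Hmul' g : exists2 k, (0 < k)%N & adjoin H r (g *+ k).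
  by have [k k_gt0 Hgk] := Hmul g; exists k => //; exact: sub_adjoin.
have [H' [psi' [sH' HH' H's psi'H psi'E]]] :=
  IH _ _ (adjoin_subgroup r sH) psiH Hmul'.
exists H', psi'; split => //.
- by move=> h /(sub_adjoin r) /HH'.
- by move=> t; rewrite inE => /predU1P[->|/H's //]; apply: HH'; exact: adjoin_gen.
- by move=> h Hh; apply: eqmodZ_trans (psi'E _ (sub_adjoin r Hh)) (psiE _ Hh).
Qed.

Lemma character_on_extend (R : realType) (G : zmodType) (U H : set G) (N : nat)
    (phi : G -> R) :
    has_index U N -> is_subgroup H -> U `<=` H -> character_on H phi ->
  exists c : G -> R,
    character_on [set: G] c /\ forall h, H h -> eqmodZ (c h) (phi h).
Proof.
move=> idxU sH UH phiH; have [f [f_surj fE]] := idxU.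
have [rep repK] := choice f_surj.
have Hmul g : exists2 k, (0 < k)%N & H (g *+ k).
  by have [k k_gt0 Ugk] := has_index_mulrn idxU g; exists k => //; exact: UH.
have [H' [psi [sH' HH' repH' psiH' psiE]]] :=
  character_on_extend_seq [seq rep i | i <- enum 'I_N] sH phiH Hmul.
have H'T y : H' y.
  have Hrep : H' (rep (f y)) by apply: repH'; rewrite map_f ?mem_enum.
  have Hdiff : H' (y - rep (f y)) by apply/HH'/UH/fE; rewrite repK.
  by have := subgroupD sH' Hdiff Hrep; rewrite subrK.
by exists psi; split => // y z _ _; apply: psiH'.
Qed.

Lemma nbhs_sub_open (D : topologicalZmodType) (V : set D) p :
  open V -> V 0 -> nbhs p [set y | V (y - p)].
Proof.
move=> oV V0; have : (fun y => y - p) @ nbhs p --> p - p.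
  apply: (@continuous_comp _ _ _ (fun y => (y, p)) (fun z : D * D => z.1 - z.2)).
    by apply: cvg_pair; [exact: cvg_id | exact: cvg_cst].
  exact: sub_continuous.
by rewrite subrr; apply; exact: open_nbhs_nbhs.
Qed.

Section ProfiniteGroup.
Variable D : topologicalZmodType.
Hypotheses (D_T2 : hausdorff_space D) (D_compact : compact [set: D]).
Hypothesis open_subgroup_basis : forall V : set D, nbhs 0 V ->
  exists H : set D, [/\ is_subgroup H, open H & H `<=` V].

Lemma open_subgroups_separate y :
  (forall H : set D, is_subgroup H -> open H -> H y) -> y = 0.
Proof.
move=> Hy; apply/esym/D_T2 => P Q P0 Qy.
have [H [sH oH HP]] := open_subgroup_basis P0.
by exists y; split; [apply: HP; exact: Hy | exact: nbhs_singleton].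
Qed.

Lemma open_subgroup_mulrn (T : set D) m : (0 < m)%N -> open T -> @torsion D `<=` T ->
  exists H : set D, [/\ is_subgroup H, open H & forall g, H (g *+ m) -> T g].
Proof.
move=> m_gt0 oT torT; apply: contrapT => noH.
pose B (H : set D) := [set g | H (g *+ m) /\ ~ T g].
pose F := filter_from [set H : set D | is_subgroup H /\ open H] B.
have FB H : is_subgroup H -> open H -> F (B H) by exists H.
have F_proper : ProperFilter F.
  apply: filter_from_proper => [|H [sH oH]].
    apply: filter_from_filter => [|H1 H2 [sH1 oH1] [sH2 oH2]].
      by exists setT; split; [exact: subgroupT | exact: openT].
    exists (H1 `&` H2); first by split; [exact: subgroupI | exact: openI].
    by move=> g [[H1g H2g] nTg].
  apply: contrapT => BH0; apply: noH; exists H; split => // g Hgm.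
  by apply: contrapT => nTg; apply: BH0; exists g.
have [p [_ clp]] := D_compact F_proper filterT.
have nTp : ~ T p.
  move=> Tp; have [g [[_ nTg] Tg]] :=
    clp _ _ (FB _ subgroupT openT) (open_nbhs_nbhs (conj oT Tp)).
  exact: nTg.
(* every open subgroup [H] contains [m p], since [B H] meets the neighbourhood [p + H] of [p] *)
apply/nTp/torT; exists m; split => //; apply: open_subgroups_separate => H sH oH.
have [g [[Hgm _] Hgp]] := clp _ _ (FB _ sH oH) (nbhs_sub_open p oH (subgroup0 sH)).
rewrite -(subKr (g *+ m) (p *+ m)) -mulrnBl.
by apply: subgroupB => //; apply: subgroupMn.
Qed.

End ProfiniteGroup.

Lemma character_continuous_modZ (R : realType) (D : topologicalZmodType) (U : set D)
    (c : D -> R) :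
    open U -> U 0 -> character_on [set: D] c -> (forall u, U u -> eqmodZ (c u) 0) ->
  continuous_modZ c.
Proof.
move=> oU U0 cD cU y e e_gt0; apply: filterS (nbhs_sub_open y oU U0) => z Uzy.
have [k hk] := eqmodZ_trans (eqmodZ_sym (character_onB subgroupT cD I I)) (cU _ Uzy).
by exists k; rewrite subr0 in hk; rewrite hk subrr normr0.
Qed.

Lemma morph_addB (G A : zmodType) (f : G -> A) :
  {morph f : a b / a + b} -> {morph f : a b / a - b}.
Proof. by move=> fD a b; apply: (addIr (f b)); rewrite -fD !subrK. Qed.

Lemma morph_add0 (G A : zmodType) (f : G -> A) : {morph f : a b / a + b} -> f 0 = 0.
Proof. by move=> fD; rewrite -(subrr 0) (morph_addB fD) subrr. Qed.

Lemma kernel_subgroup (G A : zmodType) (f : G -> A) :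
  {morph f : a b / a + b} -> is_subgroup (f @^-1` [set 0]).
Proof.
move=> fD; split => [|a b]; first exact: morph_add0.
by rewrite /preimage /= (morph_addB fD) => -> ->; rewrite subrr.
Qed.

Definition multiples_mod (G : zmodType) (U : set G) (m : nat) : set G :=
  [set y | exists d, U (y - d *+ m)].

Section MultiplesMod.
Variables (G : zmodType) (U : set G) (m : nat).
Hypothesis sU : is_subgroup U.

Lemma multiples_mod_subgroup : is_subgroup (multiples_mod U m).
Proof.
split; first by exists 0; rewrite mul0rn subr0; exact: subgroup0.
move=> y1 y2 [d1 U1] [d2 U2]; exists (d1 - d2).
have -> : y1 - y2 - (d1 - d2) *+ m = (y1 - d1 *+ m) - (y2 - d2 *+ m).
  by rewrite mulrnBl !opprB [LHS]addrACA [RHS]addrACA [- y2 + _]addrC.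
exact: subgroupB.
Qed.

Lemma sub_multiples_mod : U `<=` multiples_mod U m.
Proof. by move=> y Uy; exists 0; rewrite mul0rn subr0. Qed.

Lemma multiples_mod_mulrn d : multiples_mod U m (d *+ m).
Proof. by exists d; rewrite subrr; exact: subgroup0. Qed.

Lemma character_on_multiples_mod (R : realType) (A : zmodType) (pi : G -> A) (x : A -> R) :
    {morph pi : a b / a + b} -> (forall g, U (g *+ m) -> pi g = 0) ->
    character_on [set: A] x ->
  exists phi : G -> R, character_on (multiples_mod U m) phi /\
    forall y d, U (y - d *+ m) -> phi y = x (pi d).
Proof.
move=> piD Um_ker xA.
have pi_wd y d d' : U (y - d *+ m) -> U (y - d' *+ m) -> pi d = pi d'.
  move=> Ud Ud'; apply/eqP; rewrite -subr_eq0 -(morph_addB piD); apply/eqP/Um_ker.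
  by have := subgroupB sU Ud' Ud; rewrite opprB addrC addrA subrK -mulrnBl.
pose phi y := x (pi (xget 0 [set d | U (y - d *+ m)])).
have phiE y d : U (y - d *+ m) -> phi y = x (pi d).
  move=> Ud; congr x; apply: (pi_wd y) (Ud).
  by apply: (@xgetPex _ 0 [set d | U (y - d *+ m)]); exists d.
exists phi; split => [y1 y2 [d1 U1] [d2 U2]|]; last exact: phiE.
rewrite (phiE _ (d1 + d2)).
  by rewrite (phiE _ _ U1) (phiE _ _ U2) piD; exact: xA.
by rewrite mulrnDl opprD addrACA; apply: subgroupD.
Qed.

End MultiplesMod.

Theorem lemma1 (R : realType) (l : nat) (hl : prime l)
  (A : finZmodType) (hA : l.-nat #|A|)
  (D : topologicalZmodType) (hD : is_pro_l l D)
  (iota : Tl l -> D) (pi : D -> A)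
  (iota_add : forall x y, iota (Tl_add x y) = iota x + iota y)
  (iota_cont : continuous iota)
  (iota_inj : injective iota)
  (pi_add : {morph pi : x y / x + y})
  (pi_cont : forall a : A, open (pi @^-1` [set a]))
  (pi_surj : forall a : A, exists d : D, pi d = a)
  (exact_mid : forall d : D, pi d = 0 <-> exists t : Tl l, iota t = d)
  (htors : closure (@torsion D) = range iota)
  (x : A -> R) (hx : is_fin_character x) (hx0 : exists a : A, ~ eqmodZ (x a) 0)
  (n : nat) :
  exists c : D -> R, is_character c /\
    forall d : D, eqmodZ ((l ^ n)%:R * c d) (x (pi d)).
Proof.
have [D_T2 D_compact open_subgroup_basis open_subgroup_index] := hD.
set m := (l ^ n)%N; have m_gt0 : (0 < m)%N by rewrite expn_gt0 prime_gt0.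
pose T := pi @^-1` [set 0].
have torT : @torsion D `<=` T.
  move=> p /subset_closure; rewrite htors => -[t _ <-]; apply/exact_mid; by exists t.
have [H0 [sH0 oH0 H0T]] :=
  open_subgroup_mulrn D_T2 D_compact open_subgroup_basis m_gt0 (pi_cont 0) torT.
pose U := H0 `&` T.
have sU : is_subgroup U := subgroupI sH0 (kernel_subgroup pi_add).
have oU : open U := openI oH0 (pi_cont 0).
have [k idxU] := open_subgroup_index U sU oU.
have xA : character_on [set: A] x by move=> a b _ _; exact: hx.
have [phi [phiH phiE]] :=
  character_on_multiples_mod sU pi_add (fun g Ugm => H0T g Ugm.1) xA.
have [c [cD cE]] := character_on_extend idxU (multiples_mod_subgroup m sU)
  (sub_multiples_mod m) phiH.
exists c; split; first split.
- by move=> a b; exact: cD.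
- apply: (character_continuous_modZ oU (subgroup0 sU) cD) => u Uu.
  apply: eqmodZ_trans (cE _ (sub_multiples_mod m Uu)) _.
  rewrite (phiE u 0) ?mul0rn ?subr0 // (morph_add0 pi_add).
  exact: character_on0 subgroupT xA.
- move=> d; apply: eqmodZ_trans (eqmodZ_sym (character_onMn subgroupT cD m I)) _.
  rewrite -(phiE (d *+ m) d) ?subrr; last exact: subgroup0.
  exact: cE _ (multiples_mod_mulrn m sU d).
Qed.
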